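(* Let $\boldsymbol\psi\in\mathbb R^n$ with all entries positive and let $\boldsymbol\Sigma$ be a real symmetric positive definite $n\times n$ matrix whose diagonal entries all equal a common constant $\bar\lambda>1$. Let $\lambda_1\ge\dots\ge\lambda_n>0$ be the eigenvalues of $\boldsymbol\Sigma$ with orthonormal eigenvectors $\mathbf u_1,\dots,\mathbf u_n$, and let $k\in\{0,\dots,n\}$ be such that $\lambda_i>\bar\lambda$ for $i\le k$ and $\lambda_i\le\bar\lambda$ for $i>k$. Define $\Omega(\mathbf q)=\boldsymbol\psi^\top\mathbf q-\tfrac12\mathbf q^\top\boldsymbol\Sigma\mathbf q$, $\mathbf q^\ddagger=\tfrac12\boldsymbol\Sigma^{-1}\boldsymbol\psi$, $\mathbf q^*=(\boldsymbol\Sigma+\bar\lambda\mathbf I)^{-1}\boldsymbol\psi$, and $$w_i=\frac{(\lambda_i+3\bar\lambda)(\lambda_i-\bar\lambda)}{\lambda_i(\lambda_i+\bar\lambda)^2}.$$ Then $\Omega(\mathbf q^* )>\Omega(\mathbf q^\ddagger)$ if and only if $$\sum_{i=1}^k|w_i|(\boldsymbol\psi^\top\mathbf u_i)^2>\sum_{i=k+1}^n|w_i|(\boldsymbol\psi^\top\mathbf u_i)^2 .$$ In particular, if $k\ge 1$ and $\boldsymbol\psi\in\operatorname{span}\{\mathbf u_1,\dots,\mathbf u_k\}$, then $\Omega(\mathbf q^* )>\Omega(\mathbf q^\ddagger)$.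
   Context: Interpretation (not needed for the statement): $\mathbf q^\ddagger$ maximizes aggregate profit $\sum_i(\psi_i-\sum_j\sigma_{ij}q_j)q_i$ (monopoly), and $\mathbf q^*$ is the Cournot equilibrium output profile when firm $i$'s profit is $(\psi_i-\sum_j\sigma_{ij}q_j)q_i$. *)

From HB Require Import structures.
From mathcomp Require Import all_boot all_order all_algebra.
Set Implicit Arguments. Unset Strict Implicit. Unset Printing Implicit Defensive.
Import Order.TTheory GRing.Theory Num.Theory.
Local Open Scope ring_scope.

Definition Omega (R : realFieldType) (n : nat) (psi : 'cV[R]_n)
  (Sigma : 'M[R]_n) (q : 'cV[R]_n) : R :=
  (psi^T *m q) 0 0 - 2^-1 * (q^T *m Sigma *m q) 0 0.

Definition q_dagger (R : realFieldType) (n : nat) (psi : 'cV[R]_n)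
  (Sigma : 'M[R]_n) : 'cV[R]_n := 2^-1 *: (invmx Sigma *m psi).

Definition q_star (R : realFieldType) (n : nat) (psi : 'cV[R]_n)
  (Sigma : 'M[R]_n) (lbar : R) : 'cV[R]_n :=
  invmx (Sigma + lbar%:M) *m psi.

Definition wcoef (R : realFieldType) (lbar li : R) : R :=
  (li + 3 * lbar) * (li - lbar) / (li * (li + lbar) ^+ 2).

Definition dotc (R : realFieldType) (n : nat) (psi u : 'cV[R]_n) : R :=
  (psi^T *m u) 0 0.

From HB Require Import structures.
From mathcomp Require Import all_boot all_order all_algebra.
From mathcomp Require Import ring lra.
Set Implicit Arguments. Unset Strict Implicit. Unset Printing Implicit Defensive.
Import Order.TTheory GRing.Theory Num.Theory.
Local Open Scope ring_scope.

(* In the eigenbasis [U] of [Sigma], with coordinates [a := U^T psi], both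
   [q_star] and [q_dagger] act coordinatewise and [Omega] splits into a sum of
   one-dimensional quadratics.  A direct computation gives
   [Omega (q_star) - Omega (q_dagger) = 1/8 * sum_i w_i a_i^2], and [w_i] has the
   sign of [lambda_i - lbar]; the criterion is this sum sorted by sign.  If
   [psi] lies in the span of [u_1, ..., u_k], only positive weights survive,
   and [psi != 0] makes one of them count. *)

Section Eigenbasis.

Variables (R : realFieldType) (n : nat) (U : 'M[R]_n).
Hypothesis U_orth : U^T *m U = 1%:M.

Lemma eigen_cols_diag (M : 'M[R]_n) (d : 'I_n -> R) :
  (forall i, M *m col i U = d i *: col i U) ->
  M *m U = U *m diag_mx (\row_i d i).
Proof.
move=> eig; apply/matrixP=> i j; rewrite mul_mx_diag !mxE.
have := congr1 (fun v : 'cV_n => v i 0) (eig j); rewrite !mxE mulrC => <-.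
by apply: eq_bigr => l _; rewrite !mxE.
Qed.

Lemma invmx_eigen_mul (M : 'M[R]_n) (d : 'I_n -> R) (v : 'cV[R]_n) :
  (forall i, d i != 0) -> M *m U = U *m diag_mx (\row_i d i) ->
  invmx M *m v = U *m \col_i ((d i)^-1 * (U^T *m v) i 0).
Proof.
move=> d_neq0 MU.
have diag_inv : diag_mx (\row_i d i) *m diag_mx (\row_i (d i)^-1) = 1%:M.
  apply/matrixP=> i j; rewrite mul_diag_mx !mxE.
  by case: eqP => [->|_]; rewrite ?mulr1n ?divff // !mulr0n mulr0.
have M_rinv : M *m (U *m diag_mx (\row_i (d i)^-1) *m U^T) = 1%:M.
  by rewrite !mulmxA MU -(mulmxA U) diag_inv mulmx1 (mulmx1C U_orth).
have [M_unit _] := mulmx1_unit M_rinv.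
rewrite -[invmx M]mulmx1 -M_rinv (mulmxA (invmx M)) mulVmx // mul1mx -!mulmxA.
by congr (U *m _); apply/matrixP=> i j; rewrite mul_diag_mx !mxE (ord1 j).
Qed.

Lemma Omega_eigen (psi : 'cV[R]_n) (M : 'M[R]_n) (d : 'I_n -> R) (y : 'cV[R]_n) :
  M *m U = U *m diag_mx (\row_i d i) ->
  Omega psi M (U *m y) =
  \sum_i ((U^T *m psi) i 0 * y i 0 - 2^-1 * (d i * y i 0 ^+ 2)).
Proof.
move=> MU; rewrite /Omega.
have -> : psi^T *m (U *m y) = (U^T *m psi)^T *m y by rewrite trmx_mul trmxK mulmxA.
have -> : (U *m y)^T *m M *m (U *m y) = y^T *m (diag_mx (\row_i d i) *m y).
  by rewrite trmx_mul -!mulmxA (mulmxA M) MU -mulmxA (mulmxA U^T) U_orth mul1mx.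
rewrite mul_diag_mx !mxE mulr_sumr -sumrB; apply: eq_bigr => i _.
by rewrite !mxE; ring.
Qed.

Lemma dotc_col (psi : 'cV[R]_n) i : dotc psi (col i U) = (U^T *m psi) i 0.
Proof. by rewrite /dotc !mxE; apply: eq_bigr => j _; rewrite !mxE mulrC. Qed.

Lemma coord_span_cols (P : pred 'I_n) (c : 'I_n -> R) j :
  ~~ P j -> (U^T *m \sum_(i | P i) c i *: col i U) j 0 = 0.
Proof.
move=> Pj; rewrite mulmx_sumr summxE; apply: big1 => i Pi.
rewrite -scalemxAr mxE colE mulmxA U_orth mul1mx mxE andbT.
by case: eqP => [eji|]; [rewrite eji Pi in Pj | rewrite mulr0n mulr0].
Qed.

Lemma coord_neq0 (psi : 'cV[R]_n) : psi != 0 -> exists j, (U^T *m psi) j 0 != 0.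
Proof.
move=> psi_neq0; apply/existsP; apply: contraR psi_neq0; rewrite negb_exists.
move=> /forallP a0; apply/eqP; rewrite -[psi]mul1mx -(mulmx1C U_orth) -mulmxA.
suff -> : U^T *m psi = 0 by rewrite mulmx0.
by apply/matrixP=> i j; rewrite (ord1 j) [RHS]mxE; apply/eqP/negPn/a0.
Qed.

End Eigenbasis.

Lemma Omega_star_sub_dagger (R : realFieldType) (n : nat) (psi : 'cV[R]_n)
    (Sigma U : 'M[R]_n) (lbar : R) (lam : 'I_n -> R) :
  U^T *m U = 1%:M -> Sigma *m U = U *m diag_mx (\row_i lam i) ->
  0 < lbar -> (forall i, 0 < lam i) ->
  Omega psi Sigma (q_star psi Sigma lbar) - Omega psi Sigma (q_dagger psi Sigma)
  = 8^-1 * \sum_i wcoef lbar (lam i) * (U^T *m psi) i 0 ^+ 2.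
Proof.
move=> U_orth SU lbar_gt0 lam_gt0; set a := U^T *m psi.
have lam_neq0 i : lam i != 0 by rewrite gt_eqF.
have shift_neq0 i : lam i + lbar != 0 by rewrite gt_eqF ?addr_gt0.
have shiftU : (Sigma + lbar%:M) *m U = U *m diag_mx (\row_i (lam i + lbar)).
  rewrite mulmxDl SU mul_scalar_mx -mul_mx_scalar -mulmxDr; congr (U *m _).
  by apply/matrixP=> i j; rewrite !mxE; case: eqP; rewrite ?mulr1n ?mulr0n ?addr0.
have -> : q_star psi Sigma lbar = U *m \col_i ((lam i + lbar)^-1 * a i 0).
  by rewrite /q_star (invmx_eigen_mul U_orth _ shift_neq0 shiftU).
have -> : q_dagger psi Sigma = U *m \col_i (2^-1 * ((lam i)^-1 * a i 0)).
  rewrite /q_dagger (invmx_eigen_mul U_orth _ lam_neq0 SU) scalemxAr.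
  by congr (U *m _); apply/matrixP=> i j; rewrite !mxE.
rewrite !(Omega_eigen _ _ _ SU) // -sumrB mulr_sumr; apply: eq_bigr => i _.
rewrite !mxE /wcoef.
by field; rewrite shift_neq0 lam_neq0.
Qed.

Lemma wcoef_gt0 (R : realFieldType) (lbar l : R) :
  0 < lbar -> lbar < l -> 0 < wcoef lbar l.
Proof.
move=> lbar_gt0 lt_lbar_l; apply: divr_gt0; first by apply: mulr_gt0; lra.
by apply: mulr_gt0; [lra | apply: exprn_gt0; lra].
Qed.

Lemma wcoef_le0 (R : realFieldType) (lbar l : R) :
  0 < lbar -> 0 < l -> l <= lbar -> wcoef lbar l <= 0.
Proof.
move=> lbar_gt0 l_gt0 le_l_lbar; rewrite /wcoef mulrC; apply: mulr_ge0_le0.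
  by rewrite invr_ge0 ltW // mulr_gt0 // exprn_gt0 //; lra.
by apply: mulr_ge0_le0; lra.
Qed.

Lemma sum_mul_sign_split (R : realDomainType) (I : finType) (P : pred I)
    (w s : I -> R) :
  (forall i, P i -> 0 <= w i) -> (forall i, ~~ P i -> w i <= 0) ->
  \sum_i w i * s i
  = \sum_(i | P i) `|w i| * s i - \sum_(i | ~~ P i) `|w i| * s i.
Proof.
move=> w_ge0 w_le0; rewrite (bigID P) /= -sumrN.
congr (_ + _); apply: eq_bigr => i Pi.
  by rewrite ger0_norm ?w_ge0.
by rewrite ler0_norm ?w_le0 // mulNr opprK.
Qed.

Lemma psumr_sqr_gt0 (R : realDomainType) (I : finType) (P : pred I)
    (w a : I -> R) :
  (forall i, P i -> 0 < w i) -> (forall i, ~~ P i -> a i = 0) ->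
  (exists i, a i != 0) -> 0 < \sum_(i | P i) w i * a i ^+ 2.
Proof.
move=> w_gt0 a_out [j a_j].
have term_ge0 i : P i -> 0 <= w i * a i ^+ 2.
  by move=> Pi; rewrite mulr_ge0 ?exprn_even_ge0 ?ltW ?w_gt0.
have Pj : P j by apply: contraR a_j => /a_out ->.
rewrite lt_def sumr_ge0 // andbT psumr_neq0 //; apply/hasP; exists j.
  by rewrite mem_index_enum.
by rewrite Pj mulr_gt0 ?w_gt0 // exprn_even_gt0 ?a_j ?orbT.
Qed.

Lemma Omega_star_gt_dagger_iff (R : realFieldType) (n : nat) (psi : 'cV[R]_n)
    (Sigma U : 'M[R]_n) (lbar : R) (lam : 'I_n -> R) (k : nat) :
  U^T *m U = 1%:M -> Sigma *m U = U *m diag_mx (\row_i lam i) ->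
  0 < lbar -> (forall i, 0 < lam i) ->
  (forall i : 'I_n, (i < k)%N -> lbar < lam i) ->
  (forall i : 'I_n, (k <= i)%N -> lam i <= lbar) ->
  Omega psi Sigma (q_dagger psi Sigma) < Omega psi Sigma (q_star psi Sigma lbar)
  <->
  \sum_(i < n | (k <= i)%N) `|wcoef lbar (lam i)| * dotc psi (col i U) ^+ 2 <
  \sum_(i < n | (i < k)%N) `|wcoef lbar (lam i)| * dotc psi (col i U) ^+ 2.
Proof.
move=> U_orth SU lbar_gt0 lam_gt0 lam_hi lam_lo.
have w_ge0 (i : 'I_n) : (i < k)%N -> 0 <= wcoef lbar (lam i).
  by move=> /lam_hi/(wcoef_gt0 lbar_gt0)/ltW.
have w_le0 (i : 'I_n) : ~~ (i < k)%N -> wcoef lbar (lam i) <= 0.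
  by rewrite -leqNgt => /lam_lo/(wcoef_le0 lbar_gt0 (lam_gt0 i)).
rewrite -subr_gt0 (Omega_star_sub_dagger _ U_orth SU) // pmulr_rgt0 ?invr_gt0 //.
rewrite (sum_mul_sign_split _ w_ge0 w_le0) subr_gt0.
under [X in _ <-> X < _]eq_bigl do rewrite leqNgt.
under [X in _ <-> X < _]eq_bigr do rewrite dotc_col.
by under [X in _ <-> _ < X]eq_bigr do rewrite dotc_col.
Qed.

Theorem theorem5 (R : realFieldType) (n : nat) (psi : 'cV[R]_n)
  (Sigma : 'M[R]_n) (lbar : R) (lam : 'I_n -> R) (U : 'M[R]_n) (k : nat) :
  (forall i : 'I_n, 0 < psi i 0) ->
  Sigma^T = Sigma ->
  (forall x : 'cV[R]_n, x != 0 -> 0 < (x^T *m Sigma *m x) 0 0) ->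
  (forall i : 'I_n, Sigma i i = lbar) ->
  1 < lbar ->
  (forall i j : 'I_n, (i <= j)%N -> lam j <= lam i) ->
  (forall i : 'I_n, 0 < lam i) ->
  U^T *m U = 1%:M ->
  (forall i : 'I_n, Sigma *m col i U = lam i *: col i U) ->
  (k <= n)%N ->
  (forall i : 'I_n, (i < k)%N -> lbar < lam i) ->
  (forall i : 'I_n, (k <= i)%N -> lam i <= lbar) ->
  (Omega psi Sigma (q_dagger psi Sigma) < Omega psi Sigma (q_star psi Sigma lbar)
   <->
   \sum_(i < n | (i < k)%N) `|wcoef lbar (lam i)| * (dotc psi (col i U)) ^+ 2 >
   \sum_(i < n | (k <= i)%N) `|wcoef lbar (lam i)| * (dotc psi (col i U)) ^+ 2)
  /\
  ((1 <= k)%N ->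
   (exists c : 'I_n -> R, psi = \sum_(i < n | (i < k)%N) c i *: col i U) ->
   Omega psi Sigma (q_dagger psi Sigma) < Omega psi Sigma (q_star psi Sigma lbar)).
Proof.
move=> psi_gt0 _ _ _ lbar_gt1 _ lam_gt0 U_orth eig k_le_n lam_hi lam_lo.
have lbar_gt0 : 0 < lbar by lra.
have criterion := Omega_star_gt_dagger_iff psi U_orth (eigen_cols_diag eig)
  lbar_gt0 lam_gt0 lam_hi lam_lo.
split=> // k_gt0 [c psi_span]; apply/criterion.
have a_out (j : 'I_n) : ~~ (j < k)%N -> dotc psi (col j U) = 0.
  by rewrite dotc_col psi_span; apply: (coord_span_cols U_orth (P := fun i => (i < k)%N)).
have psi_neq0 : psi != 0.
  have n_gt0 : (0 < n)%N by exact: leq_trans k_gt0 k_le_n.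
  by apply: contra_neq (lt0r_neq0 (psi_gt0 (Ordinal n_gt0))) => ->; rewrite mxE.
rewrite [X in X < _]big1 => [|i]; last by rewrite leqNgt => /a_out ->; rewrite expr0n mulr0.
apply: psumr_sqr_gt0 a_out _ => [i /lam_hi lt_lbar|].
  by rewrite normr_gt0 gt_eqF // wcoef_gt0.
by have [j a_j] := coord_neq0 U_orth psi_neq0; exists j; rewrite dotc_col.
Qed.
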